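(* Let $I$ be an open interval and $f\in C^\infty(I)$ real-valued. Define $$\alpha:=\sup_{t\in I}\limsup_{n\to\infty}\left(\frac{|f^{(n)}(t)|}{n!}\right)^{1/n},\qquad \beta:=\inf_{t\in I}\limsup_{n\to\infty}\left(\frac{|f^{(n)}(t)|}{n!}\right)^{1/n},$$ with values in $[0,\infty]$, and $R:=1/\alpha$, $S:=1/\beta$ (with $1/0=\infty$, $1/\infty=0$). Then for every $t\in I$ with $|t|<R$ the series $\hat f(t)$ converges absolutely, and for every $t\in I$ with $|t|>S$ the series $\hat f(t)$ diverges.
   Context: For a smooth function $f$ on an interval containing the point $t$, $\hat f(t)$ denotes the series $\hat f(t):=\sum_{n=0}^{\infty}\frac{(-1)^n}{n!}\,t^n f^{(n)}(t)$. *)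

From Stdlib Require Import Reals Lra Arith Factorial.
Open Scope R_scope.

Inductive Rbar : Type := Finite (r : R) | p_infty | m_infty.

Definition Rbar_le (x y : Rbar) : Prop :=
  match x, y with
  | m_infty, _ => True
  | _, p_infty => True
  | Finite a, Finite b => a <= b
  | _, _ => False
  end.

Definition Rbar_lt (x y : Rbar) : Prop := Rbar_le x y /\ x <> y.

Definition is_Rbar_sup (P : Rbar -> Prop) (s : Rbar) : Prop :=
  (forall x, P x -> Rbar_le x s) /\
  (forall u, (forall x, P x -> Rbar_le x u) -> Rbar_le s u).

Definition is_Rbar_inf (P : Rbar -> Prop) (s : Rbar) : Prop :=
  (forall x, P x -> Rbar_le s x) /\
  (forall u, (forall x, P x -> Rbar_le u x) -> Rbar_le u s).

Definition is_limsup (u : nat -> R) (l : Rbar) : Prop :=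
  exists s : nat -> Rbar,
    (forall N, is_Rbar_sup (fun x => exists k, (N <= k)%nat /\ x = Finite (u k)) (s N)) /\
    is_Rbar_inf (fun x => exists N, x = s N) l.

Definition Rbar_inv (x : Rbar) : Rbar :=
  match x with
  | Finite a => if Req_EM_T a 0 then p_infty else Finite (/ a)
  | p_infty => Finite 0
  | m_infty => Finite 0 (* irrelevant: only applied to values in [0, oo] *)
  end.

Definition nroot (n : nat) (x : R) : R :=
  if Req_EM_T x 0 then 0 else Rpower x (/ INR n).

(* Open interval with endpoints a, b; None stands for -oo (resp. +oo). *)
Definition in_open_interval (a b : option R) (t : R) : Prop :=
  (match a with Some a' => a' < t | None => True end) /\
  (match b with Some b' => t < b' | None => True end).

(* Dn is the sequence of derivatives of f on the open set I:
   Dn 0 = f on I and Dn (n+1) is the derivative of Dn n at each point of I.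
   The existence of such a sequence is exactly f being C^oo on I. *)
Definition derivatives_on (I : R -> Prop) (f : R -> R) (Dn : nat -> R -> R) : Prop :=
  (forall x, I x -> Dn O x = f x) /\
  (forall n x, I x -> derivable_pt_lim (Dn n) x (Dn (S n) x)).

(* the n-th term of  \hat f(t) = sum_n (-1)^n / n! t^n f^(n)(t) *)
Definition fhat_term (Dn : nat -> R -> R) (t : R) (n : nat) : R :=
  (-1) ^ n / INR (fact n) * t ^ n * Dn n t.

Definition ch_seq (Dn : nat -> R -> R) (t : R) (n : nat) : R :=
  nroot n (Rabs (Dn n t) / INR (fact n)).

From Stdlib Require Import Reals Lra Lia Arith Classical ClassicalEpsilon.
Open Scope R_scope.

(* The theorem is the Cauchy-Hadamard root test applied at each point t.
   Writing c_n(t) = (|f^(n)(t)|/n!)^(1/n), the n-th term of \hat f(t) has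
   absolute value (|t| c_n(t))^n for n >= 1 (lemma [fhat_term_abs]).
   - If |t| < R = 1/alpha, then limsup_n c_n(t) <= alpha < 1/|t|, so eventually
     |t| c_n(t) <= r for some r < 1 and the series of absolute values is
     dominated by a geometric series ([root_test_cv]).
   - If |t| > S = 1/beta, then limsup_n c_n(t) >= beta > 1/|t|, so infinitely
     many terms have absolute value >= 1 and the series diverges
     ([root_test_div]). *)

Lemma Rbar_le_trans x y z : Rbar_le x y -> Rbar_le y z -> Rbar_le x z.
Proof. destruct x, y, z; simpl; intros; auto; try lra; contradiction. Qed.

Lemma Rbar_le_total x y : Rbar_le x y \/ Rbar_le y x.
Proof. destruct x, y; simpl; auto. lra. Qed.

Lemma Rbar_le_antisym x y : Rbar_le x y -> Rbar_le y x -> x = y.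
Proof. destruct x, y; simpl; intros; try contradiction; auto. f_equal; lra. Qed.

Lemma Rbar_lt_le_trans x y z : Rbar_lt x y -> Rbar_le y z -> Rbar_lt x z.
Proof.
  intros [Hxy Hne] Hyz. split; [eapply Rbar_le_trans; eauto|].
  intros ->. apply Hne, Rbar_le_antisym; auto.
Qed.

Lemma Rbar_lt_Finite x y : Rbar_lt (Finite x) (Finite y) <-> x < y.
Proof.
  split.
  - intros [Hle Hne]. simpl in Hle. destruct Hle as [Hlt|Heq]; auto.
    subst; contradiction.
  - intro Hlt. split; [simpl; lra|]. intro Heq; inversion Heq; lra.
Qed.

(* Negation reverses the order; it turns suprema into infima. *)
Definition Rbar_opp (x : Rbar) : Rbar :=
  match x with Finite a => Finite (- a) | p_infty => m_infty | m_infty => p_infty end.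

Lemma Rbar_opp_invol x : Rbar_opp (Rbar_opp x) = x.
Proof. destruct x; simpl; auto. f_equal; ring. Qed.

Lemma Rbar_opp_le x y : Rbar_le x y -> Rbar_le (Rbar_opp y) (Rbar_opp x).
Proof. destruct x, y; simpl; auto. lra. Qed.

(* Every set of extended reals has a supremum: +oo if it contains +oo or its
   finite part is unbounded, -oo if its finite part is empty, and otherwise
   the real supremum given by [completeness]. *)
Lemma Rbar_sup_exists (P : Rbar -> Prop) : exists s, is_Rbar_sup P s.
Proof.
  destruct (classic (P p_infty)) as [Hp|Hp].
  { exists p_infty. split; [intros x _; destruct x; simpl; auto|].
    intros u Hu. specialize (Hu _ Hp). destruct u; simpl in *; auto. }
  set (E := fun r => P (Finite r)).
  destruct (classic (exists r, E r)) as [Hne|Hemp].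
  2: { exists m_infty. split; [|intros; simpl; auto].
       intros [r| |] Hx; simpl; auto. apply Hemp; exists r; exact Hx. }
  destruct (classic (bound E)) as [Hb|Hnb].
  - destruct (completeness E Hb Hne) as [m [Hm_ub Hm_least]].
    exists (Finite m). split.
    + intros [r| |] Hx; simpl; auto.
    + intros [v| |] Hu; simpl; auto.
      * apply Hm_least; intros r Hr; exact (Hu _ Hr).
      * destruct Hne as [r Hr]; exact (Hu _ Hr).
  - exists p_infty. split; [intros x _; destruct x; simpl; auto|].
    intros [v| |] Hu; simpl; auto.
    + apply Hnb; exists v; intros r Hr; exact (Hu _ Hr).
    + destruct Hne as [r Hr]; exact (Hu _ Hr).
Qed.

Lemma Rbar_inf_exists (P : Rbar -> Prop) : exists s, is_Rbar_inf P s.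
Proof.
  destruct (Rbar_sup_exists (fun x => P (Rbar_opp x))) as [s [Hub Hleast]].
  exists (Rbar_opp s). split.
  - intros x Hx. rewrite <- (Rbar_opp_invol x). apply Rbar_opp_le, Hub.
    rewrite Rbar_opp_invol; auto.
  - intros u Hu. rewrite <- (Rbar_opp_invol u). apply Rbar_opp_le, Hleast.
    intros y Hy. rewrite <- (Rbar_opp_invol y). apply Rbar_opp_le; auto.
Qed.

Lemma limsup_exists (u : nat -> R) : exists l, is_limsup u l.
Proof.
  set (tail_sup N := fun x => exists k, (N <= k)%nat /\ x = Finite (u k)).
  set (s N := proj1_sig (constructive_indefinite_description _
                 (Rbar_sup_exists (tail_sup N)))).
  destruct (Rbar_inf_exists (fun x => exists N, x = s N)) as [l Hl].
  exists l, s. split; auto.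
  intro N. exact (proj2_sig (constructive_indefinite_description _
                 (Rbar_sup_exists (tail_sup N)))).
Qed.

Lemma limsup_ge0 u L : (forall n, 0 <= u n) -> is_limsup u L -> Rbar_le (Finite 0) L.
Proof.
  intros Hu [s [Hs Hinf]]. apply Hinf. intros x [N ->].
  apply Rbar_le_trans with (Finite (u N)); [simpl; apply Hu|].
  apply (proj1 (Hs N)). exists N; split; auto.
Qed.

Lemma limsup_eventually_le u L a q : is_limsup u L -> Rbar_le L (Finite a) -> a < q ->
  exists N, forall k, (N <= k)%nat -> u k <= q.
Proof.
  intros [s [Hs Hinf]] HLa Haq.
  destruct (classic (exists N, Rbar_le (s N) (Finite q))) as [[N HN]|Hnone].
  - exists N; intros k Hk.
    apply (Rbar_le_trans (Finite (u k)) (s N) (Finite q)); auto.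
    apply (proj1 (Hs N)); exists k; auto.
  - exfalso.
    (* every tail supremum exceeds q, hence so does their infimum L *)
    assert (HqL : Rbar_le (Finite q) L).
    { apply (proj2 Hinf). intros x [N ->].
      destruct (Rbar_le_total (s N) (Finite q)) as [h|h]; auto.
      exfalso; apply Hnone; eauto. }
    pose proof (Rbar_le_trans _ _ _ HqL HLa) as Hqa. simpl in Hqa; lra.
Qed.

Lemma limsup_frequently_gt u L q : is_limsup u L -> Rbar_lt (Finite q) L ->
  forall N, exists k, (N <= k)%nat /\ q < u k.
Proof.
  intros [s [Hs Hinf]] [HqL Hne] N.
  destruct (classic (exists k, (N <= k)%nat /\ q < u k)) as [h|Hnone]; auto.
  exfalso.
  (* otherwise q bounds the N-th tail, so L <= s N <= q *)
  assert (HLs : Rbar_le L (s N)) by (apply (proj1 Hinf); exists N; auto).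
  assert (Hsq : Rbar_le (s N) (Finite q)).
  { apply (proj2 (Hs N)). intros x [k [Hk ->]]. simpl.
    apply Rnot_lt_le; intro; apply Hnone; eauto. }
  apply Hne, Rbar_le_antisym; auto. eapply Rbar_le_trans; eauto.
Qed.

Lemma geometric_series_cv M r : 0 <= r < 1 -> exists l, infinite_sum (fun n => M * r ^ n) l.
Proof.
  intro Hr. exists (M * / (1 - r)).
  assert (Hgeom : Un_cv (sum_f_R0 (fun n => 1 * r ^ n)) (/ (1 - r))).
  { apply GP_infinite. rewrite Rabs_right; lra. }
  assert (Hconst : Un_cv (fun _ => M) M).
  { intros eps Heps. exists 0%nat. intros. unfold Rdist.
    rewrite Rminus_diag, Rabs_R0; lra. }
  apply Un_cv_ext with (fun n => M * sum_f_R0 (fun i => 1 * r ^ i) n).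
  - intro n. rewrite scal_sum. apply sum_eq. intros; ring.
  - exact (CV_mult _ _ _ _ Hconst Hgeom).
Qed.

Lemma sum_f_R0_ge_term f N i : (forall j, 0 <= f j) -> (i <= N)%nat -> f i <= sum_f_R0 f N.
Proof.
  intros Hf. induction N as [|N IH]; intro Hi.
  - replace i with 0%nat by lia. simpl; lra.
  - simpl. destruct (Nat.eq_dec i (S N)) as [->|Hne].
    + pose proof (cond_pos_sum f N Hf). lra.
    + pose proof (IH ltac:(lia)). pose proof (Hf (S N)). lra.
Qed.

(* A bound by r^k from some index N on becomes a bound by M r^k everywhere,
   with M absorbing the finitely many initial terms. *)
Lemma eventually_geometric_global a N r : (forall n, 0 <= a n) -> 0 < r ->
  (forall k, (N <= k)%nat -> a k <= r ^ k) -> exists M, forall i, a i <= M * r ^ i.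
Proof.
  intros Ha Hr Htail.
  assert (Hrpow : forall j, 0 < r ^ j) by (intro; apply pow_lt; lra).
  assert (Hratio : forall j, 0 <= a j / r ^ j).
  { intro j. apply Rmult_le_pos; auto. left; apply Rinv_0_lt_compat; auto. }
  exists (1 + sum_f_R0 (fun j => a j / r ^ j) N). intro i.
  pose proof (cond_pos_sum _ N Hratio) as Hsum0.
  destruct (le_lt_dec i N) as [Hi|Hi].
  - (* the i-th ratio is one of the summands *)
    pose proof (sum_f_R0_ge_term _ N i Hratio Hi) as Hle.
    replace (a i) with (a i / r ^ i * r ^ i) by (field; apply Rgt_not_eq, Hrpow).
    apply Rmult_le_compat_r; [left; auto | lra].
  - pose proof (Htail i ltac:(lia)). pose proof (Hrpow i). nra.
Qed.

Lemma series_cv_eventually_geometric a N r : (forall n, 0 <= a n) -> 0 < r < 1 ->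
  (forall k, (N <= k)%nat -> a k <= r ^ k) -> exists l, infinite_sum a l.
Proof.
  intros Ha Hr Htail.
  destruct (eventually_geometric_global a N r Ha (proj1 Hr) Htail) as [M HM].
  destruct (geometric_series_cv M r ltac:(lra)) as [lg Hlg].
  destruct (Rseries_CV_comp a (fun n => M * r ^ n) (fun n => conj (Ha n) (HM n))
              (exist _ lg Hlg)) as [l Hl].
  exists l; exact Hl.
Qed.

(* Divergence test: a series whose terms are infinitely often of absolute
   value >= 1 has no sum, since consecutive partial sums of a convergent
   series become arbitrarily close (Cauchy criterion). *)
Lemma series_terms_frequently_large (a : nat -> R) :
  (forall N, exists k, (N <= k)%nat /\ 1 <= Rabs (a k)) -> ~ exists l, infinite_sum a l.
Proof.
  intros Hlarge [l Hl].
  destruct (cv_cauchy_1 a (exist _ l Hl) (1/2) ltac:(lra)) as [N HN].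
  destruct (Hlarge (S N)) as [[|k] [Hk Hak]]; [lia|].
  pose proof (HN (S k) k ltac:(lia) ltac:(lia)) as Hclose.
  unfold Rdist in Hclose. rewrite tech5 in Hclose.
  replace (sum_f_R0 a k + a (S k) - sum_f_R0 a k) with (a (S k)) in Hclose by ring.
  lra.
Qed.

Lemma root_test_cv (u c : nat -> R) (T a : R) (L : Rbar) :
  (forall n, 0 <= u n) -> (forall n, 0 <= c n) -> 0 <= T ->
  (forall n, (1 <= n)%nat -> u n = (T * c n) ^ n) ->
  is_limsup c L -> Rbar_le L (Finite a) -> 0 <= a -> T * a < 1 ->
  exists l, infinite_sum u l.
Proof.
  intros Hu Hc HT Hroot HL HLa Ha HTa.
  (* a slightly larger q with T q < 1 still bounds c eventually *)
  set (d := (1 - T * a) / (2 * (T + 1))).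
  assert (Hd : 0 < d) by (apply Rdiv_lt_0_compat; lra).
  assert (Hd_def : d * (2 * (T + 1)) = 1 - T * a) by (unfold d; field; lra).
  set (q := a + d).
  assert (Haq : a < q) by (unfold q; lra).
  assert (HTq : T * q < 1) by (unfold q; nra).
  destruct (limsup_eventually_le c L a q HL HLa Haq) as [N HN].
  apply series_cv_eventually_geometric with (N := S N) (r := (T * q + 1) / 2); auto.
  - split; [|lra]. assert (0 <= T * q) by (apply Rmult_le_pos; lra). lra.
  - intros k Hk. rewrite Hroot by lia. apply pow_incr. split.
    + apply Rmult_le_pos; auto.
    + pose proof (Rmult_le_compat_l T _ _ HT (HN k ltac:(lia))). lra.
Qed.

Lemma root_test_div (w c : nat -> R) (T : R) (L : Rbar) :
  0 < T -> (forall n, (1 <= n)%nat -> Rabs (w n) = (T * c n) ^ n) ->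
  is_limsup c L -> Rbar_lt (Finite (/ T)) L ->
  ~ exists l, infinite_sum w l.
Proof.
  intros HT Hroot HL HLT. apply series_terms_frequently_large. intro N.
  destruct (limsup_frequently_gt c L (/ T) HL HLT (S N)) as [k [Hk Hck]].
  exists k. split; [lia|]. rewrite Hroot by lia. apply pow_R1_Rle.
  apply Rmult_lt_compat_l with (r := T) in Hck; auto.
  rewrite Rinv_r in Hck by lra. lra.
Qed.

Lemma ch_seq_nonneg Dn t n : 0 <= ch_seq Dn t n.
Proof.
  unfold ch_seq, nroot. destruct Req_EM_T; [lra|].
  unfold Rpower; left; apply exp_pos.
Qed.

Lemma ch_seq_pow Dn t n : (1 <= n)%nat -> ch_seq Dn t n ^ n = Rabs (Dn n t) / INR (fact n).
Proof.
  intro Hn. unfold ch_seq, nroot.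
  assert (Hx : 0 <= Rabs (Dn n t) / INR (fact n)).
  { apply Rmult_le_pos; [apply Rabs_pos|].
    left; apply Rinv_0_lt_compat, INR_fact_lt_0. }
  destruct Req_EM_T as [Hzero|Hnz].
  - rewrite Hzero. destruct n; [lia|simpl; ring].
  - rewrite <- Rpower_pow by (unfold Rpower; apply exp_pos).
    rewrite Rpower_mult, Rinv_l by (apply not_0_INR; lia).
    apply Rpower_1. lra.
Qed.

Lemma fhat_term_abs Dn t n : (1 <= n)%nat ->
  Rabs (fhat_term Dn t n) = (Rabs t * ch_seq Dn t n) ^ n.
Proof.
  intro Hn. rewrite Rpow_mult_distr, ch_seq_pow by auto. unfold fhat_term, Rdiv.
  rewrite !Rabs_mult, Rabs_inv, pow_1_abs, <- RPow_abs.
  rewrite (Rabs_right (INR (fact n))) by (left; apply INR_fact_lt_0). ring.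
Qed.

Lemma Rbar_inv_gt x al : 0 <= x -> Rbar_lt (Finite x) (Rbar_inv al) ->
  exists a, al = Finite a /\ 0 <= a /\ x * a < 1.
Proof.
  intros Hx Hlt. destruct al as [a| |]; simpl in Hlt.
  - destruct (Req_EM_T a 0) as [->|Hnz].
    { exists 0. repeat split; lra. }
    apply Rbar_lt_Finite in Hlt.
    assert (Ha : 0 < a).
    { destruct (Rlt_or_le a 0) as [Hneg|]; [|lra].
      pose proof (Rinv_lt_0_compat a Hneg). lra. }
    exists a. repeat split; [lra|].
    apply Rmult_lt_compat_r with (r := a) in Hlt; auto.
    rewrite Rinv_l in Hlt by lra. exact Hlt.
  - apply Rbar_lt_Finite in Hlt. lra.
  - apply Rbar_lt_Finite in Hlt. lra.
Qed.

Lemma Rbar_inv_lt x be : Rbar_le (Finite 0) be -> Rbar_lt (Rbar_inv be) (Finite x) ->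
  0 < x /\ Rbar_lt (Finite (/ x)) be.
Proof.
  intros Hbe Hlt. destruct be as [b| |]; simpl in Hbe, Hlt.
  - destruct (Req_EM_T b 0) as [->|Hnz]; [destruct Hlt as [[] _]|].
    apply Rbar_lt_Finite in Hlt.
    assert (Hb : 0 < b) by lra. pose proof (Rinv_0_lt_compat b Hb).
    split; [lra|]. apply Rbar_lt_Finite.
    rewrite <- (Rinv_inv b). apply Rinv_lt_contravar; auto. nra.
  - apply Rbar_lt_Finite in Hlt. split; auto.
    split; [simpl; auto | discriminate].
  - contradiction.
Qed.

Theorem theorem6 (a b : option R) (f : R -> R) (Dn : nat -> R -> R)
  (hsmooth : derivatives_on (in_open_interval a b) f Dn)
  (alpha beta : Rbar)
  (halpha : is_Rbar_sup
     (fun x => exists t, in_open_interval a b t /\ is_limsup (ch_seq Dn t) x) alpha)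
  (hbeta : is_Rbar_inf
     (fun x => exists t, in_open_interval a b t /\ is_limsup (ch_seq Dn t) x) beta) :
  (forall t, in_open_interval a b t -> Rbar_lt (Finite (Rabs t)) (Rbar_inv alpha) ->
     exists l, infinite_sum (fun n => Rabs (fhat_term Dn t n)) l) /\
  (forall t, in_open_interval a b t -> Rbar_lt (Rbar_inv beta) (Finite (Rabs t)) ->
     ~ exists l, infinite_sum (fhat_term Dn t) l).
Proof.
  split; intros t Ht Hbound; destruct (limsup_exists (ch_seq Dn t)) as [L HL].
  -
    assert (HLalpha : Rbar_le L alpha) by (apply (proj1 halpha); eauto).
    destruct (Rbar_inv_gt _ _ (Rabs_pos t) Hbound) as [a0 [-> [Ha0 Hta0]]].
    apply (root_test_cv _ (ch_seq Dn t) (Rabs t) a0 L); auto.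
    + intro; apply Rabs_pos.
    + intro; apply ch_seq_nonneg.
    + apply Rabs_pos.
    + intros n Hn. apply fhat_term_abs; auto.
  -
    assert (HbetaL : Rbar_le beta L) by (apply (proj1 hbeta); eauto).
    assert (Hbeta0 : Rbar_le (Finite 0) beta).
    { apply (proj2 hbeta). intros x [t' [_ Ht']].
      exact (limsup_ge0 _ _ (ch_seq_nonneg Dn t') Ht'). }
    destruct (Rbar_inv_lt _ _ Hbeta0 Hbound) as [Ht0 Hinv].
    apply (root_test_div _ (ch_seq Dn t) (Rabs t) L Ht0); auto.
    + intros n Hn. apply fhat_term_abs; auto.
    + eapply Rbar_lt_le_trans; eauto.
Qed.
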